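(* Let the filtered space be as in the context, let $w$ be a weight with $[w]_{A_2}:=\sup_{I\in\mathscr D}\langle w\rangle_I\langle w^{-1}\rangle_I<\infty$, and put $u=w^{-1}$. For $I\in\mathscr D$ let $$\rho_I=\sum_{I'\in\operatorname{ch}(I)}|\langle u\rangle_{I'}-\langle u\rangle_I|\cdot|\langle w\rangle_{I'}-\langle w\rangle_I|\cdot|I'|/|I| .$$ Then for all $I_0\in\mathscr D$ $$\sum_{I\in\mathscr D:\,I\subset I_0}\rho_I|I|\le C[w]_{A_2}|I_0|,$$ with an absolute constant $C$.
   Context: $(\mathcal X,\mathfrak S,\nu)$ is a $\sigma$-finite measure space with a filtration $(\mathfrak S_n)_{n\in\mathbb Z}$, $\mathfrak S_n\subset\mathfrak S_{n+1}$, each atomic with countable disjoint family $\mathscr D_n$ of atoms of positive $\nu$-measure; $\mathscr D=\bigcup_n\mathscr D_n$ (no atom lies in all $\mathscr D_n$). $|I|=\nu(I)$, $\langle f\rangle_I=|I|^{-1}\int_I f\,d\nu$. For $I\in\mathscr D$, $\operatorname{rk}_+(I)=\sup\{n:I\in\mathscr D_n\}$ and $\operatorname{ch}(I)$ is the set of $I'\in\mathscr D_{\operatorname{rk}_+(I)+1}$ with $I'\subset I$ ($\operatorname{ch}(I)=\{I\}$ if $\operatorname{rk}_+(I)=\infty$). A weight is $w\ge0$ with $w\in L^1(I,\nu)$ for all $I\in\mathscr D$. *)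

From HB Require Import structures.
From mathcomp Require Import all_boot all_order all_algebra.
From mathcomp Require Import all_classical all_reals all_analysis.
Set Implicit Arguments. Unset Strict Implicit. Unset Printing Implicit Defensive.
Import Order.TTheory GRing.Theory Num.Theory.
Import numFieldNormedType.Exports.
Local Open Scope classical_set_scope.
Local Open Scope ring_scope.

(* A filtration (S_n)_{n in Z} of atomic sub-sigma-algebras, each S_n given by
   its countable family D n of atoms (a countable partition of the space into
   measurable sets of positive finite measure). S_n ⊂ S_{n+1} is expressed as
   "every atom of D (n+1) lies inside an atom of D n". *)
Definition is_filtration d (T : measurableType d) (R : realType)
    (mu : {measure set T -> \bar R}) (D : int -> set (set T)) : Prop :=
  [/\ (forall n, countable (D n)),
      (forall n I, D n I -> [/\ measurable I, (0 < mu I)%E & (mu I < +oo)%E]),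
      (forall n I J, D n I -> D n J -> I <> J -> I `&` J = set0),
      (forall n, \bigcup_(I in D n) I = setT)
    & (forall n J, D (n + 1) J -> exists I, D n I /\ J `<=` I)]
  /\ (forall I, ~ (forall n, D n I)).

Definition atoms T (D : int -> set (set T)) : set (set T) :=
  [set I | exists n, D n I].

Definition children T (D : int -> set (set T)) (I : set T) : set (set T) :=
  [set J | exists n, [/\ D n I, (forall m, n < m -> ~ D m I),
                         D (n + 1) J & J `<=` I]]
  `|` [set J | J = I /\ (forall n, exists m, n < m /\ D m I)].

Definition avg d (T : measurableType d) (R : realType)
    (mu : {measure set T -> \bar R}) (f : T -> \bar R) (I : set T) : R :=
  fine (\int[mu]_(x in I) f x) / fine (mu I).

Definition invw T (R : realType) (w : T -> R) : T -> \bar R :=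
  fun x => if 0 < w x then ((w x)^-1)%:E else (+oo)%E.

Definition is_weight d (T : measurableType d) (R : realType)
    (mu : {measure set T -> \bar R}) (D : int -> set (set T)) (w : T -> R) :=
  (forall x, 0 <= w x) /\
  (forall I, atoms D I -> mu.-integrable I (EFin \o w)).

Definition A2 d (T : measurableType d) (R : realType)
    (mu : {measure set T -> \bar R}) (D : int -> set (set T)) (w : T -> R)
    : \bar R :=
  ereal_sup [set ((avg mu (EFin \o w) I) * (avg mu (invw w) I))%:E
            | I in atoms D].

Definition rho d (T : measurableType d) (R : realType)
    (mu : {measure set T -> \bar R}) (D : int -> set (set T)) (w : T -> R)
    (I : set T) : \bar R :=
  (\esum_(J in children D I)
     (`|avg mu (invw w) J - avg mu (invw w) I|
      * `|avg mu (EFin \o w) J - avg mu (EFin \o w) I|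
      * fine (mu J) / fine (mu I))%:E)%E.

From HB Require Import structures.
From mathcomp Require Import all_boot all_order all_algebra.
From mathcomp Require Import all_classical all_reals all_analysis.
From mathcomp Require Import ring lra zify measurable_realfun.
Import Order.TTheory GRing.Theory Num.Theory.
Import numFieldNormedType.Exports.
Set Implicit Arguments. Unset Strict Implicit. Unset Printing Implicit Defensive.
Local Open Scope classical_set_scope.
Local Open Scope ring_scope.

(* A Bellman-function argument.  On {x, y >= 0, x y <= Q}, with Q = [w]_{A_2},
   B(x, y) = Q - x y + 32 sqrt(Q) sqrt(x y) lies between 0 and 33 Q, and at
   every (x, y) some affine function with nonnegative slopes makes
   |x' - x| |y' - y| <= B(x, y) - B(x', y') + (affine increment).
   Take x, y the averages of u and w over an atom I and x', y' those over a
   child J; weighting by |J| the affine increments cancel, since the children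
   averages recombine into the parent's, so rho_I |I| <= B_I |I| - sum_J B_J |J|.
   Summing over the atoms inside I0 level by level telescopes to
   B_{I0} |I0| <= 33 [w]_{A_2} |I0|; an atom of infinite rank is its own only
   child and has rho_I = 0. *)

Section Bellman.
Variable R : realType.
Implicit Types p q Q x y : R.

Lemma opp_sqr_diff_mul_le p q p' q' : 0 <= p -> 0 <= q -> 0 <= p' -> 0 <= q' ->
  p <= p' -> q' <= q ->
  (p' ^+ 2 - p ^+ 2) * (q ^+ 2 - q' ^+ 2) <= 8 * (q * p' - p * q') ^+ 2.
Proof.
move=> hp hq hp' hq' hpp hqq.
set e := p' - p; set f := q - q'.
have -> : p' = p + e by rewrite /e; ring.
have -> : q' = q - f by rewrite /f; ring.
have he : 0 <= e by rewrite /e; lra.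
have hf : 0 <= f by rewrite /f; lra.
have hqe : 0 <= q * e by exact: mulr_ge0.
have hpf : 0 <= p * f by exact: mulr_ge0.
have amgm : 4 * (q * e) * (p * f) <= (q * e + p * f) ^+ 2.
  have -> : (q * e + p * f) ^+ 2 = 4 * (q * e) * (p * f) + (q * e - p * f) ^+ 2 by ring.
  have := sqr_ge0 (q * e - p * f); lra.
have cross : q * e ^+ 2 * f <= (q * e + p * f) ^+ 2.
  have : 0 <= q * e ^+ 2 * (q - f).
    by apply: mulr_ge0; [apply: mulr_ge0 => //; exact: sqr_ge0 | rewrite /f; lra].
  have : 0 <= (p * f) * (2 * (q * e) + p * f) by apply: mulr_ge0 => //; lra.
  have -> : (q * e + p * f) ^+ 2 = q ^+ 2 * e ^+ 2 + (p * f) * (2 * (q * e) + p * f) by ring.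
  have -> : q * e ^+ 2 * (q - f) = q ^+ 2 * e ^+ 2 - q * e ^+ 2 * f by ring.
  lra.
have -> : ((p + e) ^+ 2 - p ^+ 2) * (q ^+ 2 - (q - f) ^+ 2) =
  4 * (q * e) * (p * f) + 2 * (q * e ^+ 2 * f) - 2 * p * e * f ^+ 2 - e ^+ 2 * f ^+ 2 by ring.
have -> : q * (p + e) - p * (q - f) = q * e + p * f by ring.
have : 0 <= p * e * f ^+ 2 by apply: mulr_ge0; [exact: mulr_ge0 | exact: sqr_ge0].
have : 0 <= e ^+ 2 * f ^+ 2 by apply: mulr_ge0; exact: sqr_ge0.
have := sqr_ge0 (q * e + p * f); lra.
Qed.

Lemma norm_sqr_diff_mul_le p q p' q' : 0 <= p -> 0 <= q -> 0 <= p' -> 0 <= q' ->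
  `|p' ^+ 2 - p ^+ 2| * `|q' ^+ 2 - q ^+ 2| - (p' ^+ 2 - p ^+ 2) * (q' ^+ 2 - q ^+ 2)
   <= 16 * (q * p' - p * q') ^+ 2.
Proof.
move=> hp hq hp' hq'.
have hs := sqr_ge0 (q * p' - p * q').
have sqr_le a b : 0 <= a -> 0 <= b -> a ^+ 2 <= b ^+ 2 -> a <= b.
  by move=> ha hb; rewrite ler_pXn2r ?nnegrE.
have [ha|ha] := lerP 0 (p' ^+ 2 - p ^+ 2); have [hb|hb] := lerP 0 (q' ^+ 2 - q ^+ 2).
- by rewrite (ger0_norm ha) (ger0_norm hb) subrr; lra.
- rewrite (ger0_norm ha) (ltr0_norm hb).
  have hpp : p <= p' by apply: sqr_le => //; lra.
  have hqq : q' <= q by apply: sqr_le => //; lra.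
  have := opp_sqr_diff_mul_le hp hq hp' hq' hpp hqq; lra.
- rewrite (ltr0_norm ha) (ger0_norm hb).
  have hpp : p' <= p by apply: sqr_le => //; lra.
  have hqq : q <= q' by apply: sqr_le => //; lra.
  have := opp_sqr_diff_mul_le hq hp hq' hp' hqq hpp.
  have -> : (p * q' - q * p') ^+ 2 = (q * p' - p * q') ^+ 2 by ring.
  lra.
- by rewrite (ltr0_norm ha) (ltr0_norm hb); lra.
Qed.

Definition bellman Q x y := Q - x * y + 32 * Num.sqrt Q * Num.sqrt (x * y).

Lemma bellman_ge0 Q x y : 0 <= x -> 0 <= y -> x * y <= Q -> 0 <= bellman Q x y.
Proof.
move=> hx hy hQ; rewrite /bellman.
have : 0 <= 32 * Num.sqrt Q * Num.sqrt (x * y).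
  by apply: mulr_ge0; [apply: mulr_ge0 => //; exact: sqrtr_ge0 | exact: sqrtr_ge0].
lra.
Qed.

Lemma bellman_le Q x y : 0 <= x -> 0 <= y -> x * y <= Q -> bellman Q x y <= 33 * Q.
Proof.
move=> hx hy hQ; rewrite /bellman.
have hxy : 0 <= x * y by exact: mulr_ge0.
have hQ0 : 0 <= Q by lra.
have hSQ : Num.sqrt Q * Num.sqrt Q = Q by rewrite -expr2 sqr_sqrtr.
have : Num.sqrt Q * Num.sqrt (x * y) <= Num.sqrt Q * Num.sqrt Q.
  by apply: ler_wpM2l; [exact: sqrtr_ge0 | exact: ler_wsqrtr].
have := sqrtr_ge0 (x * y); lra.
Qed.

Lemma bellman_jump Q x y : 0 <= x -> 0 <= y -> x * y <= Q ->
  exists al be, [/\ 0 <= al, 0 <= be & forall x' y', 0 <= x' -> 0 <= y' ->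
    (x = 0 -> x' = 0) -> (y = 0 -> y' = 0) ->
    `|x' - x| * `|y' - y| + bellman Q x' y' + al * x + be * y
      <= bellman Q x y + al * x' + be * y'].
Proof.
move=> hx hy hQ.
have [x0|xpos] := eqVneq x 0.
  exists 0, 0; split => // x' y' _ _ /(_ x0) -> _.
  by rewrite x0 /bellman !mul0r subr0 normr0 mul0r add0r sqrtr0 mulr0 !addr0.
have [y0|ypos] := eqVneq y 0.
  exists 0, 0; split => // x' y' _ _ _ /(_ y0) ->.
  by rewrite y0 /bellman !mulr0 subr0 normr0 mulr0 add0r sqrtr0 mulr0 !addr0 !mul0r.
set p := Num.sqrt x; set q := Num.sqrt y; set S := Num.sqrt Q; set K := 32 * S.
have hp : 0 < p by rewrite sqrtr_gt0 lt0r xpos.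
have hq : 0 < q by rewrite sqrtr_gt0 lt0r ypos.
have xE : x = p ^+ 2 by rewrite sqr_sqrtr.
have yE : y = q ^+ 2 by rewrite sqr_sqrtr.
have hS : p * q <= S by rewrite -sqrtrM // ler_wsqrtr.
(* [al] and [be] are the partial derivatives of [K * sqrt (x * y) - x * y] at [(x, y)]. *)
exists (- y + K * q / (2 * p)), (- x + K * p / (2 * q)); split.
- have : 16 * q ^+ 2 <= K * q / (2 * p).
    by rewrite ler_pdivlMr ?pmulr_rgt0 // /K; nra.
  have := sqr_ge0 q; rewrite yE; lra.
- have : 16 * p ^+ 2 <= K * p / (2 * q).
    by rewrite ler_pdivlMr ?pmulr_rgt0 // /K; nra.
  have := sqr_ge0 p; rewrite xE; lra.
move=> x' y' hx' hy' _ _.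
set p' := Num.sqrt x'; set q' := Num.sqrt y'.
have x'E : x' = p' ^+ 2 by rewrite sqr_sqrtr.
have y'E : y' = q' ^+ 2 by rewrite sqr_sqrtr.
rewrite /bellman -/S !sqrtrM // -/p -/q -/p' -/q' -/K.
have tangent : K * (p' * q') = K * (p * q) + K * q / (2 * p) * (x' - x)
    + K * p / (2 * q) * (y' - y) - K * (q * p' - p * q') ^+ 2 / (2 * p * q).
  by rewrite x'E y'E xE yE; field; lra.
(* since p q <= S, the error term of [tangent] absorbs
   |x' - x| |y' - y| - (x' - x) (y' - y), which is what [hc] bounds *)
have hc := norm_sqr_diff_mul_le (ltW hp) (ltW hq) (sqrtr_ge0 x') (sqrtr_ge0 y').
rewrite -/p' -/q' -x'E -y'E -xE -yE in hc.
have : 16 * (q * p' - p * q') ^+ 2 <= K * (q * p' - p * q') ^+ 2 / (2 * p * q).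
  rewrite ler_pdivlMr ?mulr_gt0 // /K.
  have := sqr_ge0 (q * p' - p * q'); nra.
have -> : x' * y' = x * y + y * (x' - x) + x * (y' - y) + (x' - x) * (y' - y) by ring.
rewrite tangent; lra.
Qed.

End Bellman.

Section ExtendedSums.
Local Open Scope ereal_scope.
Variable R : realType.

Lemma esum_partition (T : Type) (P : set (set T)) (phi : set T -> \bar R) :
  countable P -> (forall A B, P A -> P B -> A <> B -> A `&` B = set0) ->
  phi set0 = 0 -> (forall A, P A -> 0 <= phi A) ->
  (forall e : nat -> set T, (forall n, P (e n) \/ e n = set0) -> trivIset setT e ->
     phi (\bigcup_n e n) = \sum_(n <oo) phi (e n)) ->
  phi (\bigcup_(A in P) A) = \esum_(A in P) phi A.
Proof.
move=> /countable_injP[f finj] disj phi0 phi_ge0 sigma_add.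
(* enumerate [P] along the injection [f], padding the gaps with [set0] *)
pose e n := xget set0 [set A | P A /\ f A = n].
have eP n : P (e n) /\ f (e n) = n \/ e n = set0.
  by rewrite /e; case: xgetP => [A -> HA|_]; [left|right].
have efA A : P A -> e (f A) = A.
  move=> PA; rewrite /e; case: xgetP => [B _ [PB fB]|NP].
    exact: (finj B A (mem_set PB) (mem_set PA) fB).
  by exfalso; apply: (NP A).
have e_triv : trivIset setT e.
  move=> i j _ _ [x [xi xj]].
  have [[Pi fi]|i0] := eP i; last by rewrite i0 in xi.
  have [[Pj fj]|j0] := eP j; last by rewrite j0 in xj.
  have [eij|nij] := pselect (e i = e j); first by rewrite -fi -fj eij.
  by have /seteqP[+ _] := disj _ _ Pi Pj nij => /(_ x (conj xi xj)).
have -> : \bigcup_(A in P) A = \bigcup_n e n.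
  apply/seteqP; split => x.
    by move=> [A PA Ax]; exists (f A) => //; rewrite efA.
  move=> [n _ xn]; have [[Pn _]|n0] := eP n; last by rewrite n0 in xn.
  by exists (e n).
have e_ge0 n : 0 <= phi (e n) by have [[Pn _]|->] := eP n; [exact: phi_ge0|rewrite phi0].
rewrite sigma_add //; last by move=> n; have [[]|] := eP n; [left|right].
rewrite nneseries_esumT //.
rewrite -[RHS](eq_esum (fun A (PA : P A) => congr1 phi (efA A PA))).
rewrite -(esum_image P f (fun n => phi (e n))) //.
rewrite [RHS]esum_mkcond; apply: eq_esum => n _.
case: ifPn => // /negP; rewrite inE => nP.
have [[Pn fn]|->] := eP n; last by rewrite phi0.
by exfalso; apply: nP; exists (e n).
Qed.

Lemma esumZl (T : choiceType) (I : set T) (a : T -> \bar R) (r : R) :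
  (0 <= r)%R -> (forall i, I i -> 0 <= a i) ->
  \esum_(i in I) (r%:E * a i) = r%:E * \esum_(i in I) a i.
Proof.
rewrite le0r => /predU1P[->|r0] a0.
  by rewrite mul0e; apply: esum1 => i _; rewrite mul0e.
rewrite /esum -ereal_sup_pZl //; congr ereal_sup.
have sumZ A : fsets I A -> \sum_(i \in A) r%:E * a i = r%:E * \sum_(i \in A) a i.
  move=> [finA AI]; rewrite !fsbig_finite // !big_seq ge0_sume_distrr //.
  by move=> i; rewrite in_fset_set // inE => /AI /a0.
apply/seteqP; split => x /=.
  by move=> [A hA <-]; exists (\sum_(i \in A) a i); [exists A|rewrite sumZ].
by move=> [y [A hA <-] <-]; exists A => //; rewrite sumZ.
Qed.

Lemma le_esum_subset (T : choiceType) (A B : set T) (a : T -> \bar R) :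
  A `<=` B -> (forall i, B i -> 0 <= a i) ->
  \esum_(i in A) a i <= \esum_(i in B) a i.
Proof.
move=> AB a0; rewrite esum_mkcond [leRHS]esum_mkcond.
apply: le_esum => i _; case: ifPn => iA; case: ifPn => iB //.
- by move/negP: iB; rewrite inE => /(_ (AB _ (set_mem iA))).
- by apply: a0; move: iB; rewrite inE.
Qed.

End ExtendedSums.

Definition is_rank T (D : int -> set (set T)) (m : int) (I : set T) :=
  D m I /\ forall k, (m < k)%R -> ~ D k I.

Definition next_atoms T (D : int -> set (set T)) (m : int) (I : set T) :=
  [set J | D (m + 1)%R J /\ J `<=` I].

Lemma is_rank_uniq T (D : int -> set (set T)) m m' I :
  is_rank D m I -> is_rank D m' I -> m = m'.
Proof.
move=> [Dm hm] [Dm' hm'].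
by have [/hm|/hm'|//] := ltgtP m m'.
Qed.

Lemma children_inf_rank T (D : int -> set (set T)) I :
  (forall n, exists m, (n < m)%R /\ D m I) -> children D I = [set I].
Proof.
move=> hinf; apply/seteqP; split => J.
- case=> [[n [Dn hn DJ JI]]|[-> _]] //.
  by have [k [nk Dk]] := hinf n; case: (hn _ nk).
- by move=> ->; right.
Qed.

Section Filtration.
Local Open Scope ereal_scope.
Context d (T : measurableType d) (R : realType) (mu : {measure set T -> \bar R})
  (D : int -> set (set T)).
Hypothesis hF : is_filtration mu D.

Lemma atom_measurable n I : D n I -> measurable I.
Proof. by case: hF => -[_ hp _ _ _] _ /hp []. Qed.

Lemma atom_measure_fin n I : D n I -> mu I = (fine (mu I))%:E /\ (0 < fine (mu I))%R.
Proof.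
case: hF => -[_ hp _ _ _] _ /hp [_ mu_gt0 mu_fin].
have mu_num : mu I \is a fin_num by rewrite ge0_fin_numE // ltW.
by rewrite -lte_fin fineK.
Qed.

Lemma atom_nonempty n I : D n I -> exists x, I x.
Proof.
case: hF => -[_ hp _ _ _] _ /hp [_ mu_gt0 _].
by apply/set0P/negP => /eqP I0; rewrite I0 measure0 ltxx in mu_gt0.
Qed.

Lemma atom_eq n I K x : D n I -> D n K -> I x -> K x -> I = K.
Proof.
case: hF => -[_ _ hd _ _] _ DI DK Ix Kx.
apply: contrapT => IK.
by have /seteqP[+ _] := hd _ _ _ DI DK IK => /(_ x (conj Ix Kx)).
Qed.

Lemma coarser_atom n m J : (n <= m)%R -> D m J -> exists I, D n I /\ J `<=` I.
Proof.
case: hF => -[_ _ _ _ hn] _ nm.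
have -> : m = (n + `|m - n|%N%:Z)%R by lia.
elim: `|m - n|%N J => [|k IH] J; first by rewrite addr0 => DJ; exists J; split.
rewrite -addn1 PoszD addrA => /hn [K [DK JK]].
have [I [DI KI]] := IH _ DK.
by exists I; split => //; apply: subset_trans KI.
Qed.

Lemma atom_sub m k I J x :
  (m <= k)%R -> D m I -> D k J -> I x -> J x -> J `<=` I.
Proof.
move=> mk DI DJ Ix Jx.
have [K [DK JK]] := coarser_atom mk DJ.
by rewrite (atom_eq DI DK Ix (JK _ Jx)).
Qed.

Lemma atom_between m j k I : (m <= j)%R -> (j <= k)%R -> D m I -> D k I -> D j I.
Proof.
move=> mj jk DmI DkI.
have [x Ix] := atom_nonempty DkI.
have [K [DK IK]] := coarser_atom jk DkI.
have KI := atom_sub mj DmI DK Ix (IK _ Ix).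
by rewrite (_ : I = K) //; apply/seteqP; split.
Qed.

Lemma is_rank_or_inf I : atoms D I ->
  (forall n, exists m, (n < m)%R /\ D m I) \/ exists m, is_rank D m I.
Proof.
move=> [n1 Dn1].
have [inf|/existsNP[n hn]] := pselect (forall n, exists m, (n < m)%R /\ D m I).
  by left.
right; have nb m : (n < m)%R -> ~ D m I by move=> nm Dm; apply: hn; exists m.
have n1n : (n1 <= n)%R by rewrite leNgt; apply/negP => /nb.
(* scan downwards from [n] to the last level containing [I] *)
suff /(_ `|n - n1|%N) : forall j : nat, D (n - j%:Z)%R I -> exists m, is_rank D m I.
  by apply; rewrite (_ : (n - `|n - n1|%N%:Z)%R = n1) //; lia.
elim => [|j IH]; first by rewrite subr0 => Dn; exists n.
move=> Dj; have [Dj'|nDj'] := pselect (D (n - j%:Z)%R I); first exact: IH.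
exists (n - j.+1%:Z)%R; split => // k kj Dk.
have [/nb//|kn] := ltrP n k.
by apply: nDj'; apply: (atom_between (m := (n - j.+1%:Z)%R) (k := k)) => //; lia.
Qed.

Lemma children_rank m I : is_rank D m I -> children D I = next_atoms D m I.
Proof.
move=> rkI; apply/seteqP; split => J.
- case=> [[n [Dn hn DJ JI]]|[_ hinf]].
  + by rewrite -(is_rank_uniq (conj Dn hn) rkI).
  + by have [k [mk Dk]] := hinf m; case: rkI => _ /(_ k mk).
- by move=> [DJ JI]; left; exists m; case: rkI.
Qed.

Lemma next_atoms_not_rank m I : D m I -> ~ is_rank D m I -> next_atoms D m I = [set I].
Proof.
move=> DI nrk.
have Dm1 : D (m + 1)%R I.
  have [j [mj Dj]] : exists j, (m < j)%R /\ D j I.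
    by apply: contrapT => hne; apply: nrk; split => // j mj Dj; apply: hne; exists j.
  by apply: (atom_between (m := m) (k := j)) => //; lia.
apply/seteqP; split => [J [DJ JI]|J ->]; last by split.
have [x Jx] := atom_nonempty DJ.
exact: atom_eq DJ Dm1 Jx (JI _ Jx).
Qed.

Lemma esum_next_atoms (phi : set T -> \bar R) m I : D m I ->
  phi set0 = 0 -> (forall J, next_atoms D m I J -> 0 <= phi J) ->
  (forall e : nat -> set T, (forall n, measurable (e n)) -> \bigcup_n e n `<=` I ->
     trivIset setT e -> phi (\bigcup_n e n) = \sum_(n <oo) phi (e n)) ->
  phi I = \esum_(J in next_atoms D m I) phi J.
Proof.
case: (hF) => -[hc _ hd hcov _] _ DI phi0 phi_ge0 sigma_add.
have cover : \bigcup_(J in next_atoms D m I) J = I.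
  apply/seteqP; split => [x [J [_ JI] /JI//]|x Ix].
  have : (\bigcup_(J in D (m + 1)%R) J) x by rewrite hcov.
  move=> [J DJ Jx]; exists J => //; split => //.
  by apply: (atom_sub _ DI DJ Ix Jx); lia.
rewrite -{1}cover; apply: esum_partition => //.
- by apply: (sub_countable _ (hc (m + 1)%R)); apply: subset_card_le => J [].
- by move=> A B [DA _] [DB _]; exact: hd DA DB.
- move=> e eP e_triv; have eJ n : measurable (e n) /\ e n `<=` I.
    by have [[/atom_measurable ? ?]|->] := eP n; last by split => // ? [].
  apply: sigma_add => // [n|x [n _]]; first by case: (eJ n).
  by case: (eJ n) => _; apply.
Qed.

Lemma measure_next_atoms m I : D m I -> mu I = \esum_(J in next_atoms D m I) mu J.
Proof.
move=> DI; apply: (esum_next_atoms DI) => // e me _ e_triv.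
by apply: measure_semi_bigcup => //; exact: bigcupT_measurable.
Qed.

Lemma integral_next_atoms m I (f : T -> \bar R) : D m I ->
  measurable_fun I f -> (forall x, I x -> 0 <= f x) ->
  \int[mu]_(x in I) f x = \esum_(J in next_atoms D m I) \int[mu]_(x in J) f x.
Proof.
move=> DI mf f0; apply: (esum_next_atoms (phi := fun A => \int[mu]_(x in A) f x) DI).
- exact: integral_set0.
- by move=> J [_ JI]; apply: integral_ge0 => x /JI /f0.
- move=> e me eI e_triv; rewrite ge0_integral_bigcup //.
  + by apply: measurable_funS mf => //; exact: atom_measurable _ _ DI.
  + by move=> x /eI /f0.
Qed.

Lemma avg_ge0 (f : T -> \bar R) I : (forall x, 0 <= f x) -> (0 <= avg mu f I)%R.
Proof.
move=> f0; apply: divr_ge0; last exact/fine_ge0/measure_ge0.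
by apply/fine_ge0/integral_ge0 => x _.
Qed.

Lemma integral_avg n I (f : T -> \bar R) : D n I -> mu.-integrable I f ->
  \int[mu]_(x in I) f x = (avg mu f I * fine (mu I))%:E.
Proof.
move=> DI fI; have [_ mu_gt0] := atom_measure_fin DI.
have int_num : \int[mu]_(x in I) f x \is a fin_num.
  by apply: integrable_fin_num => //; exact: atom_measurable _ _ DI.
by rewrite /avg divfK ?gt_eqF // fineK.
Qed.

Lemma esum_next_avg m I (c : R) (f : T -> \bar R) : D m I -> (0 <= c)%R ->
  mu.-integrable I f -> (forall x, 0 <= f x) ->
  \esum_(J in next_atoms D m I) (c * (avg mu f J * fine (mu J)))%:E
  = (c * (avg mu f I * fine (mu I)))%:E.
Proof.
move=> DI c0 fI f0.
rewrite EFinM -(integral_avg DI fI).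
rewrite (integral_next_atoms DI (measurable_int _ fI) (fun x _ => f0 x)) -esumZl //.
  apply: eq_esum => J [DJ JI].
  have fJ := integrableS (atom_measurable DI) (atom_measurable DJ) JI fI.
  by rewrite EFinM (integral_avg DJ fJ).
by move=> J _; apply: integral_ge0 => x _.
Qed.

Lemma esum_next_measure m I (c : R) : D m I -> (0 <= c)%R ->
  \esum_(J in next_atoms D m I) (c * fine (mu J))%:E = (c * fine (mu I))%:E.
Proof.
move=> DI c0; rewrite EFinM -(proj1 (atom_measure_fin DI)) (measure_next_atoms DI).
rewrite -esumZl //; apply: eq_esum => J [DJ _].
by rewrite EFinM -(proj1 (atom_measure_fin DJ)).
Qed.

Lemma avg_eq0_sub n k I J (f : T -> \bar R) : D n I -> D k J -> J `<=` I ->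
  mu.-integrable I f -> (forall x, 0 <= f x) ->
  avg mu f I = 0%R -> avg mu f J = 0%R.
Proof.
move=> DI DJ JI fI f0 avgI0.
have fJ := integrableS (atom_measurable DI) (atom_measurable DJ) JI fI.
have intI := integral_avg DI fI.
have intJ := integral_avg DJ fJ.
have avgJ0 := avg_ge0 J f0.
have [_ muJ_gt0] := atom_measure_fin DJ.
have : \int[mu]_(x in J) f x <= \int[mu]_(x in I) f x.
  apply: ge0_subset_integral => //; [exact: atom_measurable _ _ DJ
    | exact: atom_measurable _ _ DI | exact: measurable_int fI].
rewrite intI intJ avgI0 mul0r lee_fin => le0.
by apply/eqP; rewrite eq_le avgJ0 andbT; nra.
Qed.

Lemma is_rank_sub_ge n0 I0 m I : D n0 I0 -> I `<=` I0 -> is_rank D m I -> (n0 <= m)%R.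
Proof.
move=> DI0 II0 [DI rkI]; rewrite leNgt; apply/negP => mn0.
have [K [DK I0K]] := coarser_atom (ltW mn0) DI0.
have [x Ix] := atom_nonempty DI.
have IK := atom_eq DI DK Ix (I0K _ (II0 _ Ix)).
suff I0I : I0 = I by apply: (rkI _ mn0); rewrite -I0I.
by apply/seteqP; split => // y /I0K; rewrite -IK.
Qed.

End Filtration.

Lemma invw_ge0 T (R : realType) (w : T -> R) x : (0 <= invw w x)%E.
Proof. by rewrite /invw; case: ifPn => // w_gt0; rewrite lee_fin invr_ge0 ltW. Qed.

Section Weight.
Local Open Scope ereal_scope.
Context d (T : measurableType d) (R : realType) (mu : {measure set T -> \bar R})
  (D : int -> set (set T)) (w : T -> R) (Q : R).
Hypotheses (hF : is_filtration mu D) (hW : is_weight mu D w)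
  (hU : forall I, atoms D I -> mu.-integrable I (invw w))
  (hQ : forall I, atoms D I -> (avg mu (invw w) I * avg mu (EFin \o w) I <= Q)%R).

Local Notation u_avg I := (avg mu (invw w) I).
Local Notation w_avg I := (avg mu (EFin \o w) I).
Local Notation Phi I := ((bellman Q (u_avg I) (w_avg I) * fine (mu I))%:E).

Let u_ge0 x : 0 <= invw w x. Proof. exact: invw_ge0. Qed.

Let w_ge0 x : 0 <= (EFin \o w) x. Proof. by rewrite lee_fin; case: hW. Qed.

Let u_avg_ge0 I : (0 <= u_avg I)%R. Proof. by apply: avg_ge0 => x; exact: u_ge0. Qed.

Let w_avg_ge0 I : (0 <= w_avg I)%R. Proof. by apply: avg_ge0 => x; exact: w_ge0. Qed.

Let bellman_avg_ge0 I : atoms D I -> (0 <= bellman Q (u_avg I) (w_avg I))%R.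
Proof. by move=> aI; rewrite bellman_ge0 ?hQ. Qed.

Let w_int I : atoms D I -> mu.-integrable I (EFin \o w). Proof. by case: hW => _; apply. Qed.

Let rho_term_ge0 I J :
  0 <= (`|u_avg J - u_avg I| * `|w_avg J - w_avg I| * fine (mu J) / fine (mu I))%:E.
Proof. by rewrite lee_fin !mulr_ge0 ?invr_ge0 ?fine_ge0 ?measure_ge0. Qed.

Lemma rho_mul_ge0 I : 0 <= rho mu D w I * mu I.
Proof. by apply: mule_ge0 => //; apply: esum_ge0 => J _. Qed.

Lemma rho_inf_rank I : (forall n, exists m, (n < m)%R /\ D m I) -> rho mu D w I = 0.
Proof.
by move=> inf; rewrite /rho children_inf_rank // esum_set1 // !subrr normr0 !mul0r.
Qed.

Lemma bellman_atom_ge0 I : atoms D I -> 0 <= Phi I.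
Proof. by move=> aI; rewrite lee_fin mulr_ge0 ?fine_ge0 ?bellman_avg_ge0. Qed.

Lemma rho_mul_rank m I : is_rank D m I ->
  rho mu D w I * mu I = \esum_(J in next_atoms D m I)
    (`|u_avg J - u_avg I| * `|w_avg J - w_avg I| * fine (mu J))%:E.
Proof.
move=> rkI; have [muI mu_gt0] := atom_measure_fin hF (proj1 rkI).
rewrite /rho (children_rank rkI) muI muleC -esumZl; first last.
- by move=> J _; rewrite lee_fin !mulr_ge0 ?invr_ge0 ?fine_ge0 ?measure_ge0.
- exact: ltW.
apply: eq_esum => J _; rewrite -EFinM; congr EFin.
by field; rewrite gt_eqF.
Qed.

Lemma node_ineq m I : is_rank D m I ->
  rho mu D w I * mu I + \esum_(J in next_atoms D m I) Phi J <= Phi I.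
Proof.
move=> rkI; have DI : D m I by case: rkI.
have aI : atoms D I by exists m.
have aJ J : next_atoms D m I J -> atoms D J by case=> DJ _; exists (m + 1)%R.
have x0 := u_avg_ge0 I; have y0 := w_avg_ge0 I.
have [al [be [al0 be0 jump]]] := bellman_jump x0 y0 (hQ aI).
set x := u_avg I in x0 jump *; set y := w_avg I in y0 jump *.
set c := (al * x + be * y)%R.
have c0 : (0 <= c)%R by apply: addr_ge0; exact: mulr_ge0.
have B0 : (0 <= bellman Q x y)%R by exact: bellman_ge0 x0 y0 (hQ aI).
have pointwise J : next_atoms D m I J ->
    (`|u_avg J - x| * `|w_avg J - y| * fine (mu J))%:E
      + (bellman Q (u_avg J) (w_avg J) * fine (mu J))%:E + (c * fine (mu J))%:E
    <= (bellman Q x y * fine (mu J))%:E + (al * (u_avg J * fine (mu J)))%:E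
      + (be * (w_avg J * fine (mu J)))%:E.
  move=> nJ; have [DJ JI] := nJ; rewrite -!EFinD lee_fin.
  have := jump _ _ (u_avg_ge0 J) (w_avg_ge0 J)
    (avg_eq0_sub hF DI DJ JI (hU aI) u_ge0) (avg_eq0_sub hF DI DJ JI (w_int aI) w_ge0).
  move=> /(ler_wpM2r (fine_ge0 (measure_ge0 mu J))); rewrite /c; lra.
have := le_esum pointwise.
rewrite !esumD; first last.
all: try (move=> J nJ; rewrite -?EFinD lee_fin; repeat (done
  || exact: bellman_avg_ge0 (aJ J nJ) || exact/fine_ge0/measure_ge0
  || apply: addr_ge0 || apply: mulr_ge0)).
(* the affine terms cancel: the averages over the children, weighted by their
   measures, recombine into the averages over [I] *)
rewrite (esum_next_measure hF DI c0) (esum_next_measure hF DI B0).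
rewrite (esum_next_avg hF DI al0 (hU aI) u_ge0) (esum_next_avg hF DI be0 (w_int aI) w_ge0).
rewrite -(rho_mul_rank rkI) => sum_le.
rewrite -(@leeD2rE _ (c * fine (mu I))%:E) //.
by apply: le_trans sum_le _; rewrite -!EFinD lee_fin -/x -/y /c; lra.
Qed.

Section Tree.
Variables (n0 : int) (I0 : set T).
Hypothesis DI0 : D n0 I0.

Let level (k : nat) := [set J | D (n0 + k%:Z)%R J /\ J `<=` I0].

Let level_rho k := \esum_(J in level k `&` is_rank D (n0 + k%:Z)) (rho mu D w J * mu J).

Lemma level0 : level 0 = [set I0].
Proof.
apply/seteqP; split => J; rewrite /level addr0; last by move=> ->; split.
move=> [DJ JI0]; have [x Jx] := atom_nonempty hF DJ.
by have := atom_eq hF DJ DI0 Jx (JI0 _ Jx).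
Qed.

Lemma esum_level_succ (phi : set T -> \bar R) k : (forall J, atoms D J -> 0 <= phi J) ->
  \esum_(J in level k.+1) phi J
  = \esum_(I in level k) \esum_(J in next_atoms D (n0 + k%:Z) I) phi J.
Proof.
move=> phi0; set m := (n0 + k%:Z)%R.
have succE : (n0 + k.+1%:Z = m + 1)%R by rewrite /m; lia.
rewrite esum_esum; last by move=> I J _ [DJ _]; apply: phi0; exists (m + 1)%R.
apply: reindex_esum; split.
- move=> [I J] /= [[DI II0] [DJ JI]]; rewrite /level /= succE; split => //.
  exact: subset_trans JI II0.
- move=> [I J] [I' J']; rewrite !inE /= => -[[DI _] [DJ JI]] [[DI' _] [_ J'I']] /= JJ'.
  subst J'; have [x Jx] := atom_nonempty hF DJ.
  by rewrite (atom_eq hF DI DI' (JI _ Jx) (J'I' _ Jx)).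
- move=> J; rewrite /level /= succE => -[DJ JI0].
  have [K [DK JK]] := coarser_atom hF (lerDl m 1) DJ.
  have [x Jx] := atom_nonempty hF DJ.
  have KI0 : K `<=` I0 by apply: (atom_sub hF _ DI0 DK (JI0 _ Jx) (JK _ Jx)); rewrite /m; lia.
  by exists (K, J).
Qed.

Lemma level_step k :
  level_rho k + \esum_(J in level k.+1) Phi J <= \esum_(J in level k) Phi J.
Proof.
rewrite (esum_level_succ _ bellman_atom_ge0) /level_rho esum_mkcondr -esumD.
- apply: le_esum => I [DI _]; case: ifPn => [/set_mem rkI|/negP nrk].
    exact: node_ineq rkI.
  rewrite (next_atoms_not_rank hF DI) ?esum_set1 ?add0e //.
    exact: bellman_atom_ge0 (ex_intro _ _ DI).
  by move=> rkI; apply: nrk; rewrite inE.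
- by move=> I [DI _]; case: ifPn => // _; exact: rho_mul_ge0.
- move=> I _; apply: esum_ge0 => J [DJ _].
  exact: bellman_atom_ge0 (ex_intro _ _ DJ).
Qed.

Lemma sum_level_rho_le : \sum_(k <oo) level_rho k <= Phi I0.
Proof.
have Phi_level0 : \esum_(J in level 0) Phi J = Phi I0.
  by rewrite level0 esum_set1 //; exact: bellman_atom_ge0 (ex_intro _ _ DI0).
have level_rho_ge0 k : 0 <= level_rho k by apply: esum_ge0 => J _; exact: rho_mul_ge0.
have telescope k : \sum_(0 <= i < k) level_rho i + \esum_(J in level k) Phi J <= Phi I0.
  elim: k => [|k IH]; first by rewrite big_geq // add0e Phi_level0.
  rewrite big_nat_recr //= -addeA; apply: le_trans IH; apply: leeD2l; exact: level_step.
apply: lime_le; first exact: is_cvg_nneseries.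
apply: nearW => k; apply: le_trans (telescope k); apply: leeDl.
by apply: esum_ge0 => J [DJ _]; exact: bellman_atom_ge0 (ex_intro _ _ DJ).
Qed.

Lemma rho_tree_le :
  \esum_(I in [set I | atoms D I /\ I `<=` I0]) (rho mu D w I * mu I) <= Phi I0.
Proof.
apply: le_trans sum_level_rho_le.
rewrite (esumID [set I | exists m, is_rank D m I]); last by move=> I _; exact: rho_mul_ge0.
rewrite [X in _ + X]esum1 ?adde0; last first.
  move=> I [[aI _] /= norank].
  have [inf|//] := is_rank_or_inf hF aI.
  by rewrite rho_inf_rank // mul0e.
pose ranked := [set: nat] `*`` (fun k => level k `&` is_rank D (n0 + k%:Z)).
have -> : \sum_(k <oo) level_rho k = \esum_(I in snd @` ranked) (rho mu D w I * mu I).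
  rewrite nneseries_esumT; last by move=> k; apply: esum_ge0 => J _; exact: rho_mul_ge0.
  rewrite /level_rho esum_esum; last by move=> *; exact: rho_mul_ge0.
  rewrite esum_image // => -[k I] [k' I']; rewrite !inE /= => -[_ [_ rk]] [_ [_ rk']] /= II'.
  by subst I'; congr pair; have /= := is_rank_uniq rk rk'; lia.
apply: le_esum_subset => [I [[aI II0] [m rkI]]|I _]; last exact: rho_mul_ge0.
have n0m := is_rank_sub_ge hF DI0 II0 rkI.
exists (`|m - n0|%N, I) => //; rewrite /ranked /level /=.
by rewrite (_ : (n0 + _)%R = m); [case: rkI | lia].
Qed.

End Tree.

End Weight.

Lemma avg_mul_le_A2 d (T : measurableType d) (R : realType) (mu : {measure set T -> \bar R})
  (D : int -> set (set T)) (w : T -> R) I : atoms D I ->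
  ((avg mu (EFin \o w) I * avg mu (invw w) I)%:E <= A2 mu D w)%E.
Proof. by move=> aI; apply: ereal_sup_ubound; exists I. Qed.

Theorem lemma4p5 :
  exists C : nat,
  forall (R : realType) (d : measure_display) (T : measurableType d)
    (mu : {measure set T -> \bar R}) (D : int -> set (set T)) (w : T -> R),
    sigma_finite setT mu ->
    is_filtration mu D ->
    is_weight mu D w ->
    (* [w]_{A_2} finite; in particular <w^{-1}>_I < oo for every atom I *)
    (forall I, atoms D I -> mu.-integrable I (invw w)) ->
    (A2 mu D w < +oo)%E ->
    forall I0, atoms D I0 ->
      (\esum_(I in [set I | atoms D I /\ I `<=` I0]) (rho mu D w I * mu I)
       <= (C%:R)%:E * A2 mu D w * mu I0)%E.
Proof.
exists 33%N => R d T mu D w _ hF hW hU A2_fin I0 [n0 DI0].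
have u_avg_ge0 I : (0 <= avg mu (invw w) I)%R by apply: avg_ge0 => x; exact: invw_ge0.
have w_avg_ge0 I : (0 <= avg mu (EFin \o w) I)%R.
  by apply: avg_ge0 => x; rewrite lee_fin; case: hW.
have A2_ge0 : (0 <= A2 mu D w)%E.
  by apply: le_trans (avg_mul_le_A2 mu w (ex_intro _ n0 DI0)); rewrite lee_fin mulr_ge0.
set Q := fine (A2 mu D w).
have A2E : A2 mu D w = Q%:E by rewrite fineK // ge0_fin_numE.
have hQ I : atoms D I -> (avg mu (invw w) I * avg mu (EFin \o w) I <= Q)%R.
  by move=> aI; rewrite mulrC -lee_fin -A2E; exact: avg_mul_le_A2.
apply: le_trans (rho_tree_le hF hW hU hQ DI0) _.
have [muI0 mu_gt0] := atom_measure_fin hF DI0.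
rewrite A2E muI0 -!EFinM lee_fin ler_wpM2r ?(ltW mu_gt0) //.
exact: bellman_le (u_avg_ge0 I0) (w_avg_ge0 I0) (hQ I0 (ex_intro _ n0 DI0)).
Qed.
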